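(* Let $n\ge2$ be an integer. Then Hypothesis C holds for $\mathbf{GL}_n$: for every quasicharacter $\phi$ of $G=\mathbf{GL}_n(F)$ of positive depth $r$ and every $x\in\mathscr B(\mathbf{GL}_n,F)$, the restriction $\phi|_{G_{x,(r/2)^+}}$ is realized by an element of $\mathfrak z^*_{-r}$.
   Context: $F$ is a nonarchimedean local field of odd residual characteristic, valuation normalized by $v_F(F^\times)=\mathbb Z$, $\mathfrak O_F,\mathfrak P_F$ its integers and maximal ideal, $\psi$ a fixed character of $F$ trivial on $\mathfrak P_F$ and nontrivial on $\mathfrak O_F$. $G_{x,t}$, $\mathfrak g_{x,t}$ are Moy–Prasad subgroups and lattices, $G_{x,t^+}=\bigcup_{s>t}G_{x,s}$, $\mathfrak g^*_{x,t}=\{\lambda\in\mathfrak g^*:\lambda(\mathfrak g_{x,(-t)^+})\subset\mathfrak P_F\}$, $\mathfrak g^*_t=\bigcup_x\mathfrak g^*_{x,t}$; $\mathfrak z^*$ is the dual of the centre of $\mathfrak g$, viewed as the $\mathrm{Ad}^*G$-fixed elements of $\mathfrak g^*$ (the functionals $X\mapsto\beta\operatorname{tr}X$), and $\mathfrak z^*_t=\mathfrak z^*\cap\mathfrak g^*_t$. The depth of a quasicharacter $\phi$ is the least $r\ge0$ with $\phi|_{G_{x,r^+}}=1$ for some (equivalently all) $x$. For $r>0$, $e:\mathfrak g_{x,(r/2)^+}/\mathfrak g_{x,r^+}\to G_{x,(r/2)^+}/G_{x,r^+}$ is Yu's canonical (Moy–Prasad) isomorphism; $\phi|_{G_{x,(r/2)^+}}$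 is realized by $X^*\in\mathfrak g^*$ if $\phi(e(Y+\mathfrak g_{x,r^+}))=\psi(X^*(Y))$ for all $Y\in\mathfrak g_{x,(r/2)^+}$. *)

From HB Require Import structures.
From mathcomp Require Import all_boot all_order all_algebra.
From mathcomp Require Import reals complex.
Set Implicit Arguments. Unset Strict Implicit. Unset Printing Implicit Defensive.
Import Order.TTheory GRing.Theory Num.Theory.
Local Open Scope ring_scope.

Section LocalField.
Variable F : fieldType.
(* v : normalized discrete valuation on F^x (value at 0 is irrelevant) *)
Variable v : F -> int.

(* x \in P_F^k  (with v(0) = +oo) *)
Definition inPk (k : int) (x : F) : Prop := x = 0 \/ k <= v x.
Definition inO (x : F) : Prop := inPk 0 x.
Definition inP (x : F) : Prop := inPk 1 x.

Definition is_nonarch_local_field : Prop :=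
  (forall x y, x != 0 -> y != 0 -> v (x * y) = v x + v y) /\ [/\ (forall x y, x != 0 -> y != 0 -> x + y != 0 -> Num.min (v x) (v y) <= v (x + y)),
      (exists pi : F, pi != 0 /\ v pi = 1),
      (forall u : nat -> F,
          (forall k : int, exists N, forall m p, (N <= m)%N -> (N <= p)%N -> inPk k (u m - u p)) ->
          (exists l, forall k : int, exists N, forall m, (N <= m)%N -> inPk k (u m - l))),
      (* finite residue field O_F / P_F *)
      (exists s : seq F, (forall a, a \in s -> inO a) /\
                          forall x, inO x -> exists2 a, a \in s & inP (x - a)) &
      (* odd residual characteristic: 2 is a unit of O_F *)
      ((2 : F) != 0 /\ v 2 = 0) ].

Variable C : numClosedFieldType.

Definition is_level_one_char (psi : F -> C) : Prop :=
  [/\ (forall x y, psi (x + y) = psi x * psi y),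
      (forall x, psi x != 0),
      (forall x, inP x -> psi x = 1) &
      (exists x, inO x /\ psi x != 1)].

Variable n : nat.
Variable R : realType.

(* A point of the building B(GL_n, F), given by an apartment (a basis of F^n,
   the columns of B) and real coordinates a; its (additive) norm is
   alpha(sum_i c_i b_i) = min_i (v c_i + a_i). *)
Record bpoint := BPoint { bbasis : 'M[F]_n ; bcoord : 'I_n -> R }.

Definition is_bpoint (x : bpoint) : Prop := bbasis x \in unitmx.

(* Lattice function: Lambda_x(s) = { w in F^n : alpha_x(w) >= s } *)
Definition lattice (x : bpoint) (s : R) (w : 'cV[F]_n) : Prop :=
  let c := invmx (bbasis x) *m w in
  forall i : 'I_n, c i 0 = 0 \/ s <= (v (c i 0))%:~R + bcoord x i.

Definition mp_lie (x : bpoint) (t : R) (X : 'M[F]_n) : Prop :=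
  forall (s : R) (w : 'cV[F]_n), lattice x s w -> lattice x (s + t) (X *m w).

Definition mp_lie_plus (x : bpoint) (t : R) (X : 'M[F]_n) : Prop :=
  exists2 s, t < s & mp_lie x s X.

Definition mp_grp (x : bpoint) (t : R) (g : 'M[F]_n) : Prop :=
  g \in unitmx /\ mp_lie x t (g - 1).
Definition mp_grp_plus (x : bpoint) (t : R) (g : 'M[F]_n) : Prop :=
  exists2 s, t < s & mp_grp x s g.

(* quasicharacter of GL_n(F) (a homomorphism GL_n(F) -> C^x; values off
   GL_n(F) are irrelevant) *)
Definition is_hom (phi : 'M[F]_n -> C) : Prop :=
  (forall g, g \in unitmx -> phi g != 0) /\
  (forall g h, g \in unitmx -> h \in unitmx -> phi (g * h) = phi g * phi h).

Definition trivial_on (phi : 'M[F]_n -> C) (S : 'M[F]_n -> Prop) : Prop :=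
  forall g, S g -> phi g = 1.

Definition has_depth (phi : 'M[F]_n -> C) (r : R) : Prop :=
  [/\ 0 <= r,
      (exists x, is_bpoint x /\ trivial_on phi (mp_grp_plus x r)) &
      (forall r', 0 <= r' -> r' < r ->
         forall x, is_bpoint x -> ~ trivial_on phi (mp_grp_plus x r'))].

Definition in_gstar_x (x : bpoint) (t : R) (lam : 'M[F]_n -> F) : Prop :=
  forall X, mp_lie_plus x (- t) X -> inP (lam X).
Definition in_gstar (t : R) (lam : 'M[F]_n -> F) : Prop :=
  exists x, is_bpoint x /\ in_gstar_x x t lam.

Definition zstar (beta : F) : 'M[F]_n -> F := fun X => beta * \tr X.

(* phi|_{G_{x,(r/2)+}} is realized by lam : for GL_n Yu's isomorphism e is
   Y + g_{x,r+} |-> (1 + Y) G_{x,r+} *)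
Definition realizes (psi : F -> C) (phi : 'M[F]_n -> C) (x : bpoint) (r : R)
    (lam : 'M[F]_n -> F) : Prop :=
  forall Y, mp_lie_plus x (r / 2) Y -> phi (1 + Y) = psi (lam Y).

End LocalField.

From HB Require Import structures.
From mathcomp Require Import all_boot all_order all_algebra.
From mathcomp Require Import reals complex.
From mathcomp Require Import fingroup perm.
From mathcomp Require Import boolp zify ring lra.
Import Order.TTheory GRing.Theory Num.Theory.
Local Open Scope ring_scope.
Set Implicit Arguments. Unset Strict Implicit. Unset Printing Implicit Defensive.

(* A quasicharacter phi of GL_n(F) kills every transvection: since 2 is a unit,
   a transvection is a commutator with a dilation.  Row reduction then shows
   phi = chi o det, and depth r forces chi (1 + e) = 1 for v e > r.  For Y in
   g_{x,(r/2)+} one has det (1 + Y) = 1 + tr Y + e with v e > r, so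
   phi (1 + Y) = chi (1 + tr Y).
   Now a |-> chi (1 + a) is an additive character of {v a > r/2} trivial on
   {v a > r}; the self-duality of the residue field under psi, applied one
   layer P^k / P^(k+1) at a time, writes it as psi (beta * a) with
   v beta >= 1 - (the least integer above r), which is exactly the condition
   for beta * tr to lie in z*_{-r}. *)

Section CharactersOfGL.
Variables (F C : fieldType) (m : nat).
Local Notation n := m.+1.
Variable phi : 'M[F]_n -> C.
Hypothesis phi_neq0 : forall g, g \in unitmx -> phi g != 0.
Hypothesis phiM : forall g h, g \in unitmx -> h \in unitmx -> phi (g *m h) = phi g * phi h.
Hypothesis two_neq0 : (2 : F) != 0.

Lemma phi1 : phi 1%:M = 1.
Proof.
have := phiM (@unitmx1 F n) (@unitmx1 F n); rewrite mul1mx => e.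
by apply: (mulfI (phi_neq0 (@unitmx1 F n))); rewrite -e mulr1.
Qed.

Definition transvection (j : 'I_n) (a : 'cV[F]_n) : 'M[F]_n := 1%:M + a *m ('e_j : 'rV_n).
Definition dilation (j : 'I_n) (c : F) : 'M[F]_n :=
  diag_mx (\row_i (if i == j then c else 1)).

Lemma transvection0 j : transvection j 0 = 1%:M.
Proof. by rewrite /transvection mul0mx addr0. Qed.

Lemma transvectionD j (a b : 'cV[F]_n) : b j 0 = 0 ->
  transvection j a *m transvection j b = transvection j (a + b).
Proof.
move=> b0; have eb : ('e_j : 'rV_n) *m b = 0.
  by apply/matrixP => i k; rewrite -rowE !mxE !ord1.
rewrite /transvection mulmxDl mul1mx mulmxDr mulmx1 -!mulmxA (mulmxA 'e_j) eb.
by rewrite mul0mx mulmx0 addr0 mulmxDl addrAC addrA.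
Qed.

Lemma transvection_unit j (a : 'cV[F]_n) : a j 0 = 0 -> transvection j a \in unitmx.
Proof.
move=> a0; have : transvection j a *m transvection j (- a) = 1%:M.
  by rewrite transvectionD ?subrr ?transvection0 // mxE a0 oppr0.
by case/mulmx1_unit.
Qed.

Lemma dilationM j c d : dilation j c *m dilation j d = dilation j (c * d).
Proof.
rewrite /dilation mulmx_diag; congr diag_mx; apply/rowP => i; rewrite !mxE.
by case: (i == j); rewrite ?mulr1.
Qed.

Lemma dilation1 j : dilation j 1 = 1%:M.
Proof. by apply/matrixP => i k; rewrite !mxE; case: (i == j). Qed.

Lemma det_dilation j c : \det (dilation j c) = c.
Proof.
rewrite det_diag (bigD1 j) //= big1 ?mulr1 ?mxE ?eqxx //.
by move=> i /negbTE ij; rewrite mxE ij.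
Qed.

Lemma dilation_unit j c : c != 0 -> dilation j c \in unitmx.
Proof. by move=> c0; rewrite unitmxE det_dilation unitfE. Qed.

Lemma dilation_conj_transvection j (b : 'cV[F]_n) (t : F) : t != 0 -> b j 0 = 0 ->
  dilation j t *m transvection j b *m dilation j t^-1 = transvection j (t^-1 *: b).
Proof.
move=> t0 b0; rewrite /transvection mulmxDr mulmx1 mulmxDl dilationM mulfV // dilation1.
congr (_ + _); rewrite mulmxA.
have -> : dilation j t *m b = b.
  rewrite /dilation mul_diag_mx; apply/matrixP => i k; rewrite !mxE ord1.
  by case: eqP => [->|_]; rewrite ?b0 ?mulr0 ?mul1r.
rewrite -mulmxA; have -> : ('e_j : 'rV_n) *m dilation j t^-1 = t^-1 *: 'e_j.
  rewrite /dilation mul_mx_diag; apply/matrixP => i k; rewrite !mxE.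
  by case: (k == j); rewrite ?andbT ?andbF ?mulr0 ?mul0r ?mulr1 // mulrC.
by rewrite -scalemxAr scalemxAl.
Qed.

Lemma transvection_commutator j (a : 'cV[F]_n) : a j 0 = 0 ->
  let b := ((2 : F)^-1 - 1)^-1 *: a in
  transvection j a =
    (dilation j 2 *m transvection j b *m dilation j 2^-1) *m transvection j (- b).
Proof.
move=> a0 b; have b0 : b j 0 = 0 by rewrite mxE a0 mulr0.
rewrite dilation_conj_transvection // transvectionD; last by rewrite mxE b0 oppr0.
congr transvection; rewrite -{2}[b]scale1r -scalerBl /b scalerA mulfV ?scale1r //.
rewrite subr_eq0; apply: contra_neq (oner_neq0 F) => /(congr1 GRing.inv).
rewrite invrK invr1 => e2; have : (1 : F) + 1 = 1 by exact: e2.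
by move/(canRL (addrK 1)); rewrite subrr.
Qed.

Lemma hom_transvection j (a : 'cV[F]_n) : a j 0 = 0 -> phi (transvection j a) = 1.
Proof.
move=> a0; rewrite (transvection_commutator a0); set b := _ *: a.
have b0 : b j 0 = 0 by rewrite mxE a0 mulr0.
have nb0 : (- b) j 0 = 0 by rewrite mxE b0 oppr0.
have u2 : dilation j 2 \in unitmx by apply: dilation_unit.
have u2' : dilation j 2^-1 \in unitmx by apply: dilation_unit; rewrite invr_eq0.
have ub := transvection_unit b0; have unb := transvection_unit nb0.
rewrite !phiM ?unitmx_mul ?u2 ?ub ?u2' ?unb //.
have dilationV : phi (dilation j 2) * phi (dilation j 2^-1) = 1.
  by rewrite -phiM // dilationM mulfV // dilation1 phi1.
have transvectionV : phi (transvection j b) * phi (transvection j (- b)) = 1.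
  by rewrite -phiM // transvectionD // subrr transvection0 phi1.
by rewrite (mulrC (phi (dilation j 2))) -(mulrA (phi (transvection j b))) dilationV mulr1.
Qed.

Lemma det_transvection j (a : 'cV[F]_n) : a j 0 = 0 -> \det (transvection j a) = 1.
Proof.
move=> a0; rewrite (transvection_commutator a0); set b := _ *: a.
have b0 : b j 0 = 0 by rewrite mxE a0 mulr0.
rewrite !mulmxE !detM !det_dilation (mulrC 2) -(mulrA _ 2) mulfV // mulr1 -detM.
rewrite -mulmxE transvectionD; last by rewrite mxE b0 oppr0.
by rewrite subrr transvection0 det1.
Qed.

Definition det_char (c : F) := phi (dilation 0 c).

Lemma hom_dilation j c : c != 0 -> phi (dilation j c) = det_char c.
Proof.
have P2 : tperm_mx 0 j *m tperm_mx 0 j = 1%:M :> 'M[F]_n.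
  by rewrite -perm_mxM tperm2 perm_mx1.
have PDP : tperm_mx 0 j *m dilation j c *m tperm_mx 0 j = dilation 0 c.
  apply/matrixP => i k; rewrite -xrowE -xcolE !mxE (inj_eq (@perm_inj _ _)).
  by rewrite -[X in _ == X](tpermL 0 j) (inj_eq (@perm_inj _ _)).
move=> c0; rewrite /det_char -PDP; have [uP _] := mulmx1_unit P2.
rewrite !phiM ?unitmx_mul ?uP ?dilation_unit //.
by rewrite mulrAC -phiM // P2 phi1 mul1r.
Qed.

Lemma det_charM c d : c != 0 -> d != 0 -> det_char (c * d) = det_char c * det_char d.
Proof. by move=> c0 d0; rewrite /det_char -dilationM phiM ?dilation_unit. Qed.

Lemma det_char_neq0 c : c != 0 -> det_char c != 0.
Proof. by move=> c0; apply/phi_neq0/dilation_unit. Qed.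

Definition id_on_cols k (g : 'M[F]_n) :=
  forall i (j : 'I_n), (j < k)%N -> g i j = (i == j)%:R.

Lemma mul_transvection_mxE j (a : 'cV[F]_n) (g : 'M[F]_n) r s :
  (transvection j a *m g) r s = g r s + a r 0 * g j s.
Proof.
rewrite /transvection mulmxDl mul1mx -mulmxA -rowE mxE; congr (_ + _).
by rewrite mxE big_ord1 !mxE.
Qed.

Lemma mul_mx_dilationE j c (g : 'M[F]_n) r s :
  (g *m dilation j c) r s = g r s * (if s == j then c else 1).
Proof. by rewrite /dilation mul_mx_diag !mxE. Qed.

Lemma sum_mul_delta (P : pred 'I_n) (f : 'I_n -> F) i :
  \sum_(l | P l) f l * (i == l)%:R = if P i then f i else 0.
Proof.
rewrite big_mkcond (bigD1 i) //= big1 ?addr0 ?eqxx ?mulr1 //.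
by move=> l /negbTE li; rewrite eq_sym li mulr0; case: (P l).
Qed.

Lemma unit_pivot_exists k (kk : 'I_n) (g : 'M[F]_n) : kk = k :> nat ->
  g \in unitmx -> id_on_cols k g -> exists i : 'I_n, (k <= i)%N /\ g i kk != 0.
Proof.
move=> ekk ug gid.
have [i /andP[ki gi]|none] := pickP [pred i : 'I_n | (k <= i)%N && (g i kk != 0)].
  by exists i.
pose w : 'cV[F]_n := \col_l ((l == kk)%:R + (if (l < k)%N then - g l kk else 0)).
have gw : g *m w = 0.
  apply/matrixP => i z; rewrite ord1 !mxE.
  under eq_bigr => l _ do rewrite mxE mulrDr.
  rewrite big_split /= (eq_bigr (fun l : 'I_n => g i l * (kk == l)%:R)); last first.
    by move=> l _; rewrite eq_sym.
  rewrite sum_mul_delta.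
  rewrite (eq_bigr (fun l : 'I_n => if (l < k)%N then - g l kk * (i == l)%:R else 0));
    last by move=> l _; case: ifP => lk; rewrite ?mulr0 // gid // mulrC.
  rewrite -big_mkcond /= sum_mul_delta.
  case: ifP => ik; first by rewrite subrr.
  move/negbT: (none i); rewrite /= leqNgt ik /= negbK => /eqP ->.
  by rewrite addr0.
have : w = 0 by rewrite -(mulKmx ug w) gw mulmx0.
move/matrixP/(_ kk 0); rewrite !mxE eqxx ekk ltnn addr0.
by move/eqP; rewrite oner_eq0.
Qed.

Lemma nonzero_pivot_exists k (kk : 'I_n) (g : 'M[F]_n) : kk = k :> nat ->
  g \in unitmx -> id_on_cols k g ->
  exists g1 : 'M[F]_n, [/\ g1 \in unitmx, id_on_cols k g1, g1 kk kk != 0,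
    phi g1 = phi g & \det g1 = \det g].
Proof.
move=> ekk ug gid; have [i [ki gi]] := unit_pivot_exists ekk ug gid.
have [gkk|] := eqVneq (g kk kk) 0; last by exists g.
have ik : i != kk by apply: contraNneq gi => ->; rewrite gkk.
(* adding row i to row kk does not disturb the first k columns *)
pose a : 'cV[F]_n := delta_mx kk 0.
have a0 : a i 0 = 0 by rewrite mxE (negbTE ik).
exists (transvection i a *m g); split.
- by rewrite unitmx_mul transvection_unit.
- move=> r j jk; rewrite mul_transvection_mxE gid // (gid i j jk).
  have /negbTE -> : i != j by apply: contraTneq jk => <-; rewrite -leqNgt.
  by rewrite mulr0 addr0.
- by rewrite mul_transvection_mxE gkk add0r mxE !eqxx /= mul1r.
- by rewrite phiM ?transvection_unit // hom_transvection // mul1r.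
- by rewrite mulmxE detM det_transvection // mul1r.
Qed.

Lemma hom_det_step k (kk : 'I_n) (g : 'M[F]_n) : kk = k :> nat ->
  g \in unitmx -> id_on_cols k g ->
  exists2 g', g' \in unitmx /\ id_on_cols k.+1 g' &
    (phi g' = det_char (\det g') -> phi g = det_char (\det g)).
Proof.
move=> ekk ug gid.
have [g1 [ug1 g1id g1kk phig1 detg1]] := nonzero_pivot_exists ekk ug gid.
set c := g1 kk kk.
pose a : 'cV[F]_n := \col_l (if l == kk then 0 else - g1 l kk / c).
have a0 : a kk 0 = 0 by rewrite mxE eqxx.
have ci : c^-1 != 0 by rewrite invr_eq0.
have uT := transvection_unit a0; have uD := dilation_unit kk ci.
exists (transvection kk a *m g1 *m dilation kk c^-1).
  split; first by rewrite !unitmx_mul uT ug1 uD.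
  move=> r j; rewrite ltnS leq_eqVlt => /orP[/eqP ejk|jk];
    rewrite mul_mx_dilationE mul_transvection_mxE.
    have -> : j = kk by apply: val_inj => /=; rewrite ejk ekk.
    rewrite eqxx mxE; have [->|rk] := eqVneq r kk; first by rewrite mul0r addr0 mulfV.
    by rewrite -/c mulfVK // addrN mul0r.
  have /negbTE -> : j != kk.
    by apply: contraTneq jk => /(congr1 val) /= ->; rewrite ekk ltnn.
  rewrite mulr1 g1id // (g1id kk j jk).
  have /negbTE -> : kk != j.
    by apply: contraTneq jk => /(congr1 val) /= <-; rewrite ekk ltnn.
  by rewrite mulr0 addr0.
have dg1 : \det g1 != 0 by rewrite -unitfE -unitmxE.
rewrite (phiM _ uD) ?unitmx_mul ?uT // (phiM uT ug1) hom_transvection // mul1r.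
rewrite hom_dilation // !mulmxE !detM det_transvection // mul1r det_dilation.
rewrite det_charM // => /mulIf; rewrite -phig1 -detg1; apply.
exact: det_char_neq0.
Qed.

Lemma hom_det g : g \in unitmx -> phi g = det_char (\det g).
Proof.
suff step d k : (k + d = n)%N -> g \in unitmx -> id_on_cols k g ->
    phi g = det_char (\det g).
  by move=> ug; apply: (@step n 0) => // i j; rewrite ltn0.
elim: d k g => [|d IH] k g hk ug gid.
  have -> : g = 1%:M.
    by rewrite addn0 in hk; apply/matrixP => i j; rewrite mxE gid // hk.
  by rewrite phi1 det1 /det_char dilation1 phi1.
have kn : (k < n)%N by rewrite -hk addnS ltnS leq_addr.
have [g' [ug' g'id]] := @hom_det_step k (Ordinal kn) g erefl ug gid.
by apply; apply: (IH k.+1) => //; rewrite addSn -addnS.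
Qed.

Lemma hom_conj (B g : 'M[F]_n) : B \in unitmx -> g \in unitmx ->
  phi (B *m g *m invmx B) = phi g.
Proof.
move=> uB ug; rewrite !hom_det ?unitmx_mul ?uB ?ug ?unitmx_inv //.
by rewrite !mulmxE !detM det_inv mulrC mulrA mulVf ?mul1r // -unitfE -unitmxE.
Qed.

End CharactersOfGL.

Lemma sum_moved_ge (R : numDomainType) (T : finType) (s : {perm T}) (t : R) :
  0 <= t -> s != 1%g -> t *+ 2 <= \sum_i (if s i == i then 0 else t).
Proof.
move=> t0 s1.
have [i0 hi0] : exists i0, s i0 != i0.
  apply/existsP; move: s1; apply: contraR; rewrite negb_exists => /forallP h.
  by apply/eqP/permP => i; rewrite perm1; apply/eqP/negPn/h.
have hj0 : s (s i0) != s i0 by apply: contra hi0 => /eqP /perm_inj ->.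
rewrite (bigD1 i0) //= (negbTE hi0) (bigD1 (s i0)) //= (negbTE hj0).
by rewrite mulr2n addrA lerDl; apply: sumr_ge0 => i _; case: ifP.
Qed.

Lemma sumr_const_seq (V : nmodType) (I : Type) (r : seq I) (P : pred I) (x : V) :
  \sum_(i <- r | P i) x = x *+ count P r.
Proof. by rewrite big_const_seq iter_addr_0. Qed.

Section Valuation.
Variables (F : fieldType) (v : F -> int).
Hypothesis vM : forall x y, x != 0 -> y != 0 -> v (x * y) = v x + v y.
Hypothesis vD : forall x y, x != 0 -> y != 0 -> x + y != 0 ->
  Num.min (v x) (v y) <= v (x + y).

Local Notation Pk := (inPk v).

Lemma val1 : v 1 = 0.
Proof.
have := vM (oner_neq0 F) (oner_neq0 F); rewrite mulr1.
by move: (v 1) => a ?; lia.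
Qed.

Lemma valN1 : v (-1) = 0.
Proof.
have n1 : (-1 : F) != 0 by rewrite oppr_eq0 oner_neq0.
have := vM n1 n1; rewrite mulrNN mulr1 val1.
by move: (v (-1)) => a ?; lia.
Qed.

Lemma valN x : v (- x) = v x.
Proof.
have [->|x0] := eqVneq x 0; first by rewrite oppr0.
by rewrite -mulN1r vM ?oppr_eq0 ?oner_neq0 // valN1 add0r.
Qed.

Lemma valV x : x != 0 -> v x^-1 = - v x.
Proof.
move=> x0; have := vM x0 (invr_neq0 x0); rewrite mulfV // val1.
by move: (v x) (v x^-1) => a b ?; lia.
Qed.

Lemma val_prod (I : Type) (r : seq I) (f : I -> F) : (forall i, f i != 0) ->
  \prod_(i <- r) f i != 0 /\ v (\prod_(i <- r) f i) = \sum_(i <- r) v (f i).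
Proof.
move=> nz; elim/big_rec2: _ => [|i p q _ [p0 vp]]; first by rewrite oner_neq0 val1.
by rewrite mulf_neq0 // vM // vp.
Qed.

Lemma val_surj (pi : F) : pi != 0 -> v pi = 1 ->
  forall k : int, exists u, u != 0 /\ v u = k.
Proof.
move=> p0 vp.
have vX (j : nat) : pi ^+ j != 0 /\ v (pi ^+ j) = j%:Z.
  elim: j => [|j [h1 h2]]; first by rewrite expr0 oner_neq0 val1.
  by rewrite exprS mulf_neq0 // vM // vp h2; split => //; lia.
case=> j; first by exists (pi ^+ j); apply: vX.
have [h1 h2] := vX j.+1; exists (pi ^+ j.+1)^-1; rewrite invr_eq0 valV // h2.
by split => //; rewrite NegzE.
Qed.

Lemma inPk0 k : Pk k 0.
Proof. by left. Qed.

Lemma inPk_val_ge k x : x != 0 -> Pk k x -> k <= v x.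
Proof. by move=> x0 [h|//]; move: x0; rewrite h eqxx. Qed.

Lemma inPkW a b x : a <= b -> Pk b x -> Pk a x.
Proof. by move=> ab [->|h]; [left | right; apply: le_trans h]. Qed.

Lemma inPkD k x y : Pk k x -> Pk k y -> Pk k (x + y).
Proof.
case=> [->|hx]; first by rewrite add0r.
case=> [->|hy]; first by rewrite addr0; right.
have [->|x0] := eqVneq x 0; first by rewrite add0r; right.
have [->|y0] := eqVneq y 0; first by rewrite addr0; right.
have [->|s0] := eqVneq (x + y) 0; first by left.
by right; apply: le_trans (vD x0 y0 s0); rewrite le_min hx hy.
Qed.

Lemma inPkN k x : Pk k x -> Pk k (- x).
Proof. by case=> [->|h]; [left; rewrite oppr0 | right; rewrite valN]. Qed.

Lemma inPkB k x y : Pk k x -> Pk k y -> Pk k (x - y).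
Proof. by move=> hx hy; apply: inPkD hx (inPkN hy). Qed.

Lemma inPkM a b x y : Pk a x -> Pk b y -> Pk (a + b) (x * y).
Proof.
case=> [->|hx]; first by rewrite mul0r; left.
case=> [->|hy]; first by rewrite mulr0; left.
have [->|x0] := eqVneq x 0; first by rewrite mul0r; left.
have [->|y0] := eqVneq y 0; first by rewrite mulr0; left.
by right; rewrite vM // lerD.
Qed.

Lemma inPk_sum k (I : Type) (r : seq I) (P : pred I) (f : I -> F) :
  (forall i, P i -> Pk k (f i)) -> Pk k (\sum_(i <- r | P i) f i).
Proof.
move=> h; elim/big_rec: _ => [|i x Pi hx]; first exact: inPk0.
by apply: inPkD => //; apply: h.
Qed.

Lemma oneD_neq0 z : Pk 1 z -> 1 + z != 0.
Proof.
move=> hz; apply/negP => /eqP e.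
have ez : z = -1 by rewrite -(addKr 1 z) e addr0.
move: hz; rewrite ez => -[/eqP|]; first by rewrite oppr_eq0 oner_eq0.
by rewrite valN1.
Qed.

Lemma inPk_invoneD z : Pk 1 z -> Pk 0 (1 + z)^-1.
Proof.
move=> hz; have nz := oneD_neq0 hz.
have h0 : Pk 0 (1 + z) by apply: inPkD; [right; rewrite val1 | apply: inPkW hz].
right; rewrite valV // oppr_ge0.
have := inPk_val_ge nz h0; rewrite le_eqVlt => /orP[/eqP <-//|h1].
have : Pk 1 ((1 + z) - z) by apply: inPkB => //; right.
by rewrite addrK => -[/eqP|]; rewrite ?oner_eq0 ?val1.
Qed.

Lemma prod_oneD_sub_sum (I : Type) (r : seq I) (y : I -> F) (J : int) :
  0 <= J -> (forall i, Pk J (y i)) ->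
  Pk (J + J) (\prod_(i <- r) (1 + y i) - 1 - \sum_(i <- r) y i).
Proof.
move=> J0 hy; elim: r => [|i r IH]; first by rewrite !big_nil subrr sub0r oppr0; left.
rewrite !big_cons.
set P := \prod_(j <- r) _ in IH *; set S := \sum_(j <- r) _ in IH *.
have hS : Pk J S by apply: inPk_sum.
have -> : (1 + y i) * P - 1 - (y i + S) = (P - 1 - S) + y i * S + y i * (P - 1 - S).
  by ring.
apply: inPkD; first by apply: inPkD => //; apply: inPkM.
by apply: (inPkW _ (inPkM (hy i) IH)); lia.
Qed.

Section DetOneD.
Variables (R : numDomainType) (m : nat) (a : 'I_m.+1 -> R) (t : R).
Variable Y : 'M[F]_m.+1.
Hypothesis t_ge0 : 0 <= t.
Hypothesis Y_shift : forall i j, Y i j = 0 \/ a j + t <= (v (Y i j))%:~R + a i.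

Lemma val_oneD_entry_ge (s : {perm 'I_m.+1}) i : (1%:M + Y) i (s i) != 0 ->
  (if s i == i then 0 else t) + (a (s i) - a i) <= (v ((1%:M + Y) i (s i)))%:~R.
Proof.
rewrite !mxE; have [e|ne] := eqVneq (s i) i.
  rewrite e subrr add0r ler0z => fi; apply: (inPk_val_ge fi).
  apply: inPkD; first by right; rewrite val1.
  case: (Y_shift i i) => [->|h]; first by left.
  right; rewrite -(ler_int R); apply: le_trans t_ge0 _.
  by rewrite -(lerD2r (a i)) [t + _]addrC.
rewrite add0r => f0.
case: (Y_shift i (s i)) => [e|h]; first by move: f0; rewrite e eqxx.
by rewrite addrA lerBlDr addrC.
Qed.

(* Every non-identity term of the Leibniz expansion of det (1 + Y) contains at
   least two off-diagonal entries, each raising the valuation by t once the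
   shifts a telescope around the permutation. *)
Lemma det_oneD_sub_prod (N : int) : (forall z : int, t *+ 2 <= z%:~R -> N <= z) ->
  Pk N (\det (1%:M + Y) - \prod_i (1 + Y i i)).
Proof.
move=> hN; rewrite /determinant (bigD1 1%g) //= odd_perm1 expr0 mul1r.
under eq_bigr do rewrite perm1 !mxE eqxx.
rewrite addrC addrK; apply: inPk_sum => s s1.
rewrite -[N]add0r; apply: inPkM.
  by right; case: (odd_perm s); rewrite ?expr0 ?expr1 ?val1 ?valN1.
have [/forallP nz|] := boolP [forall i, (1%:M + Y) i (s i) != 0]; last first.
  rewrite negb_forall => /existsP[i /negPn/eqP fi0].
  by left; rewrite (bigD1 i) //= fi0 mul0r.
right; have [_ ->] := val_prod (index_enum _) nz; apply: hN.
rewrite (big_morph _ (@intrD R) (erefl 0%:~R)).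
apply: le_trans (sum_moved_ge t_ge0 s1) _.
apply: le_trans (ler_sum _ (fun i _ => val_oneD_entry_ge (nz i))).
rewrite big_split /= sumrB [X in _ - X](reindex_inj (@perm_inj _ s)) /=.
by rewrite subrr addr0.
Qed.

End DetOneD.

Definition res_eqb (x y : F) : bool := `[< Pk 1 (x - y) >].

Lemma res_eqP x y : reflect (Pk 1 (x - y)) (res_eqb x y).
Proof. exact: asboolP. Qed.

Lemma res_eq_refl x : res_eqb x x.
Proof. by apply/res_eqP; rewrite subrr; left. Qed.

Lemma res_eq_sym x y : res_eqb x y -> res_eqb y x.
Proof. by move/res_eqP/inPkN; rewrite opprB => /res_eqP. Qed.

Lemma res_eq_trans x y z : res_eqb x y -> res_eqb y z -> res_eqb x z.
Proof.
move=> /res_eqP h1 /res_eqP h2; apply/res_eqP.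
by have := inPkD h1 h2; rewrite addrA subrK.
Qed.

Fixpoint res_reps (s : seq F) : seq F :=
  if s is a :: s' then
    (if has (res_eqb a) (res_reps s') then res_reps s' else a :: res_reps s')
  else [::].

Lemma res_reps_subset s : {subset res_reps s <= s}.
Proof.
elim: s => [//|a s IH] x /=; case: ifP => _; first by move/IH; rewrite inE orbC => ->.
by rewrite !inE => /orP[->//|/IH ->]; rewrite orbT.
Qed.

Lemma res_reps_complete s a : a \in s -> exists2 b, b \in res_reps s & res_eqb a b.
Proof.
elim: s => [//|c s IH] /=; rewrite inE => /orP[/eqP ->|aS].
  case: ifP => [/hasP[b bin cb]|_]; first by exists b.
  by exists c; rewrite ?inE ?eqxx // res_eq_refl.
have [b bin cb] := IH aS; case: ifP => _; first by exists b.
by exists b => //; rewrite inE bin orbT.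
Qed.

Lemma res_reps_uniq s : uniq (res_reps s).
Proof.
elim: s => [//|a s IH] /=; case: ifP => // /negbT hn /=; rewrite IH andbT.
by apply: contra hn => ain; apply/hasP; exists a => //; apply: res_eq_refl.
Qed.

Lemma res_reps_inj s a b :
  a \in res_reps s -> b \in res_reps s -> res_eqb a b -> a = b.
Proof.
elim: s => [//|c s IH] /=; case: ifP => [_|/negbT hn]; first exact: IH.
rewrite !inE => /orP[/eqP->|ain] /orP[/eqP->|bin] //.
- by move=> cb; case/hasP: hn; exists b.
- by move/res_eq_sym => cb; case/hasP: hn; exists a.
- exact: IH.
Qed.

Section ResidueDuality.
Variables (C : numFieldType) (psi : F -> C).
Hypothesis psiD : forall x y, psi (x + y) = psi x * psi y.
Hypothesis psiP : forall x, Pk 1 x -> psi x = 1.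
Hypothesis psi_nontriv : exists x, Pk 0 x /\ psi x != 1.
Variable s : seq F.
Hypothesis s_inO : forall a, a \in s -> Pk 0 a.
Hypothesis s_cover : forall x, Pk 0 x -> exists2 a, a \in s & Pk 1 (x - a).

Lemma psi0 : psi 0 = 1.
Proof. by apply: psiP; left. Qed.

Lemma psiNK x : psi (- x) * psi x = 1.
Proof. by rewrite -psiD addNr psi0. Qed.

Local Notation T := (res_reps s).

Lemma reps_inO a : a \in T -> Pk 0 a.
Proof. by move/res_reps_subset/s_inO. Qed.

Lemma reps_cover x : Pk 0 x -> has (res_eqb x) T.
Proof.
move=> /s_cover[a ain /res_eqP ca]; have [b bin cab] := res_reps_complete ain.
by apply/hasP; exists b => //; apply: (@res_eq_trans _ a) => //; apply/res_eqP.
Qed.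

Definition rep x := nth 0 T (find (res_eqb x) T).

Lemma mem_rep x : Pk 0 x -> rep x \in T.
Proof. by move/reps_cover => h; rewrite /rep mem_nth // -has_find. Qed.

Lemma res_eq_rep x : Pk 0 x -> res_eqb x (rep x).
Proof. by move/reps_cover => h; apply: nth_find. Qed.

Lemma sum_reps_shift (f : F -> C) y :
  (forall a b, Pk 0 a -> Pk 0 b -> Pk 1 (a - b) -> f a = f b) -> Pk 0 y ->
  \sum_(a <- T) f (a + y) = \sum_(a <- T) f a.
Proof.
move=> fper yO; pose sg a := rep (a + y).
have aO a : a \in T -> Pk 0 (a + y).
  by move/reps_inO => ?; rewrite -[0]addr0; apply: inPkD.
rewrite (eq_big_seq (fun a => f (sg a))); last first.
  move=> a aT; apply: fper; [exact: aO|exact/reps_inO/mem_rep/aO|].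
  exact/res_eqP/res_eq_rep/aO.
rewrite -(big_map sg xpredT f); apply: perm_big.
have sg_inj : {in T &, injective sg}.
  move=> a b aT bT e; apply: (res_reps_inj aT bT).
  have h1 := res_eq_rep (aO _ aT); have h2 := res_eq_rep (aO _ bT).
  rewrite /sg in e; rewrite e in h1.
  move/res_eqP: (res_eq_trans h1 (res_eq_sym h2)).
  by rewrite opprD addrACA subrr addr0 => /res_eqP.
have sg_uniq : uniq (map sg T) by rewrite map_inj_in_uniq // res_reps_uniq.
have sg_sub : {subset map sg T <= T} by move=> b /mapP[a aT ->]; apply/mem_rep/aO.
have [_ eqi] := uniq_min_size sg_uniq sg_sub (eq_leq (esym (size_map _ _))).
exact: uniq_perm sg_uniq (res_reps_uniq s) eqi.
Qed.

Lemma sum_reps_char_eq0 (h : F -> C) :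
  (forall a b, Pk 0 a -> Pk 0 b -> h (a + b) = h a * h b) ->
  (forall a, Pk 1 a -> h a = 1) ->
  forall y, Pk 0 y -> h y != 1 -> \sum_(a <- T) h a = 0.
Proof.
move=> hD hP y yO hy.
have hper a b : Pk 0 a -> Pk 0 b -> Pk 1 (a - b) -> h a = h b.
  move=> aO bO ab; have abO : Pk 0 (a - b) by apply: inPkW ab.
  by rewrite -(subrK b a) (hD _ _ abO bO) (hP _ ab) mul1r.
have := @sum_reps_shift h y hper yO.
rewrite (eq_big_seq (fun a => h a * h y)); last by move=> a /reps_inO aO; rewrite hD.
rewrite -mulr_suml => /eqP; rewrite -subr_eq0 -{2}[\sum_(a <- T) h a]mulr1 -mulrBr.
by rewrite mulf_eq0 subr_eq0 (negbTE hy) orbF => /eqP.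
Qed.

Lemma sum_reps_psi x : Pk 0 x ->
  \sum_(c <- T) psi (- (c * x)) = if res_eqb x 0 then (size T)%:R else 0.
Proof.
move=> xO; case: ifP => [/res_eqP|/negbT/res_eqP]; rewrite subr0 => xP.
  rewrite -count_predT -sumr_const_seq.
  apply: eq_big_seq => c /reps_inO cO; apply/psiP/inPkN.
  by rewrite -[1]add0r; apply: inPkM.
have x0 : x != 0 by apply: contra_not_neq xP => ->; left.
have vx : v x = 0.
  case: xO => [/eqP|]; first by rewrite (negbTE x0).
  rewrite le_eqVlt => /orP[/eqP <-//|vx_gt0]; case: xP; right.
  by move: (v x) vx_gt0 => a ?; lia.
have [z [zO pz]] := psi_nontriv.
apply: (@sum_reps_char_eq0 (fun c => psi (- (c * x))) _ _ (- z / x)).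
- by move=> a b _ _; rewrite mulrDl opprD psiD.
- by move=> a aP; apply/psiP/inPkN; rewrite -[1]addr0; apply: inPkM aP xO.
- have z0 : z != 0 by apply: contraNneq pz => ->; rewrite psi0.
  right; rewrite vM ?oppr_eq0 ?invr_eq0 // valN valV // vx oppr0 addr0.
  exact: inPk_val_ge zO.
- by rewrite /= mulfVK // opprK.
Qed.

(* the Fourier coefficients of eta on the residue field cannot all vanish, and
   a nonzero one forces eta = psi (c * _) by orthogonality *)
Lemma residue_char_dual (eta : F -> C) :
  (forall a b, Pk 0 a -> Pk 0 b -> eta (a + b) = eta a * eta b) ->
  (forall a, Pk 1 a -> eta a = 1) ->
  exists c, Pk 0 c /\ forall x, Pk 0 x -> eta x = psi (c * x).
Proof.
move=> etaD etaP; pose S c := \sum_(x <- T) eta x * psi (- (c * x)).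
have total : \sum_(c <- T) S c != 0.
  rewrite /S exchange_big /=.
  rewrite (eq_big_seq (fun x => if res_eqb x 0 then (size T)%:R else 0)); last first.
    move=> x xT; rewrite -mulr_sumr sum_reps_psi; last exact: reps_inO.
    by case: ifP => [/res_eqP|_]; rewrite ?mulr0 // subr0 => /etaP ->; rewrite mul1r.
  rewrite -big_mkcond sumr_const_seq -mulrnA pnatr_eq0 muln_eq0 negb_or -!lt0n.
  have /hasP[b bT b0] := reps_cover (inPk0 0).
  rewrite -has_count; apply/andP; split; first by case: (T) bT.
  by apply/hasP; exists b => //; apply: res_eq_sym.
have [c cT Sc] : exists2 c, c \in T & S c != 0.
  apply/hasP; apply: contraNT total => /hasPn S0; apply/eqP.
  by apply: big1_seq => c /andP[_ /S0 /negPn/eqP].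
exists c; split => [|y yO]; first exact: reps_inO.
have hy : eta y * psi (- (c * y)) = 1.
  apply: contraNeq Sc => hne; apply/eqP.
  apply: (@sum_reps_char_eq0 (fun x => eta x * psi (- (c * x))) _ _ y) => //.
  - move=> a b aO bO; rewrite etaD // mulrDr opprD psiD.
    by rewrite mulrACA.
  - move=> a aP; rewrite etaP // mul1r; apply/psiP/inPkN.
    by rewrite -[1]add0r; apply: inPkM (reps_inO cT) aP.
by rewrite -[LHS]mulr1 -(psiNK (c * y)) mulrA hy mul1r.
Qed.

Section IdealCharDual.
Variables (pi : F) (theta : F -> C) (J M : int).
Hypotheses (pi_neq0 : pi != 0) (v_pi : v pi = 1).
Hypothesis thetaD : forall a b, Pk J a -> Pk J b -> theta (a + b) = theta a * theta b.
Hypothesis thetaM : forall a, Pk M a -> theta a = 1.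

(* the discrepancy between theta and psi (beta * _) on P^K / P^(K+1) is a
   character of the residue field, hence of the form psi (c * _) *)
Lemma ideal_char_dual_step (K : int) (beta : F) : J <= K -> K < M ->
  Pk (1 - M) beta -> (forall a, Pk (K + 1) a -> theta a = psi (beta * a)) ->
  exists beta', Pk (1 - M) beta' /\ forall a, Pk K a -> theta a = psi (beta' * a).
Proof.
move=> JK KM bP hb.
have [u [u0 vu]] := val_surj pi_neq0 v_pi K.
have uJ x : Pk 0 x -> Pk J (u * x).
  by move=> xO; apply: (inPkW JK); rewrite -[K]addr0; apply: inPkM xO; right; rewrite vu.
have u_invO a : Pk K a -> Pk 0 (a / u).
  by move=> aK; rewrite -(subrr K); apply: inPkM aK _; right; rewrite valV // vu.
pose eta x := theta (u * x) * psi (- (beta * (u * x))).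
have [c [cO hc]] : exists c, Pk 0 c /\ forall x, Pk 0 x -> eta x = psi (c * x).
  apply: residue_char_dual => [a b aO bO|a aP].
    rewrite /eta (mulrDr u) thetaD; [|exact: uJ|exact: uJ].
    by rewrite (mulrDr beta) opprD psiD mulrACA.
  rewrite /eta hb; first by rewrite mulrC psiNK.
  by apply: (inPkM _ aP); right; rewrite vu.
exists (beta + c / u); split.
  apply: inPkD bP _; apply: (@inPkW _ (0 - K)); first by rewrite add0r; lia.
  by apply: inPkM cO _; right; rewrite valV // vu.
move=> a aK; have ea : a = u * (a / u) by rewrite mulrC mulfVK.
have : theta a = eta (a / u) * psi (beta * a).
  by rewrite /eta -ea -mulrA psiNK mulr1.
rewrite hc; last exact: u_invO.
rewrite -psiD => ->; congr psi.
by rewrite mulrDl addrC mulrAC mulrA.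
Qed.

Lemma ideal_char_dual : J <= M ->
  exists beta, Pk (1 - M) beta /\ forall a, Pk J a -> theta a = psi (beta * a).
Proof.
move=> JM; suff dual_above (d : nat) : J <= M - d%:Z -> exists beta, Pk (1 - M) beta /\
    forall a, Pk (M - d%:Z) a -> theta a = psi (beta * a).
  have e : J = M - (`|M - J|%N)%:Z by lia.
  by rewrite {1}e; apply: dual_above; rewrite -e.
elim: d => [|d IH] Jd.
  by exists 0; split => [|a]; [left | rewrite subr0 mul0r psi0 => /thetaM].
have [beta [bP hb]] := IH ltac:(lia).
apply: (ideal_char_dual_step Jd) bP _; first by lia.
by have -> : M - d.+1%:Z + 1 = M - d%:Z by lia.
Qed.

End IdealCharDual.

End ResidueDuality.

Lemma char_oneD_shift (C : fieldType) (chi : F -> C) (M : int) :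
  (forall c d, c != 0 -> d != 0 -> chi (c * d) = chi c * chi d) ->
  (forall e, Pk M e -> chi (1 + e) = 1) -> 1 <= M ->
  forall z e, Pk 1 z -> Pk M e -> chi (1 + z + e) = chi (1 + z).
Proof.
move=> chiM chiP M1 z e hz he.
have z0 := oneD_neq0 hz; have e1 : Pk M (e / (1 + z)).
  by rewrite -[M]addr0; apply: inPkM he (inPk_invoneD hz).
have -> : 1 + z + e = (1 + z) * (1 + e / (1 + z)).
  by rewrite mulrDr mulr1 mulrCA mulfV // mulr1.
by rewrite chiM ?(chiP _ e1) ?mulr1 //; apply: oneD_neq0 (inPkW M1 e1).
Qed.

Lemma char_oneD_additive (C : fieldType) (chi : F -> C) (J M : int) :
  (forall c d, c != 0 -> d != 0 -> chi (c * d) = chi c * chi d) ->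
  (forall e, Pk M e -> chi (1 + e) = 1) -> 1 <= J -> J <= M -> M <= J + J ->
  forall a b, Pk J a -> Pk J b -> chi (1 + (a + b)) = chi (1 + a) * chi (1 + b).
Proof.
move=> chiM chiP J1 JM MJJ a b ha hb; have ha1 := inPkW J1 ha; have hb1 := inPkW J1 hb.
rewrite -chiM ?oneD_neq0 //.
have -> : (1 + a) * (1 + b) = 1 + (a + b) + a * b by ring.
rewrite (char_oneD_shift chiM chiP (le_trans J1 JM)) //; first exact: inPkD.
exact: inPkW MJJ (inPkM ha hb).
Qed.

Section Lattices.
Variables (R : realType) (m : nat).
Local Notation n := m.+1.

Lemma mp_lie_entry_shift (x : bpoint F n R) (t : R) (Y : 'M[F]_n) :
  is_bpoint x -> mp_lie v x t Y ->
  let Y' := invmx (bbasis x) *m Y *m bbasis x in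
  forall i j, Y' i j = 0 \/ bcoord x j + t <= (v (Y' i j))%:~R + bcoord x i.
Proof.
move=> xb hY Y' i j.
have L : lattice v x (bcoord x j) (bbasis x *m delta_mx j 0).
  move=> k /=; rewrite mulKmx // mxE; have [->|kj] := eqVneq k j; last by left.
  by right; rewrite val1 add0r.
by have := hY _ _ L i; rewrite /= !mulmxA -colE mxE addrC.
Qed.

Lemma mp_lie_conj_dilation (x : bpoint F n R) (u : F) (M : int) :
  is_bpoint x -> Pk M (u - 1) ->
  mp_lie v x M%:~R (bbasis x *m dilation 0 u *m invmx (bbasis x) - 1).
Proof.
move=> xb hu s w L lhs i; rewrite {}/lhs; set c := invmx (bbasis x) *m w.
have -> : invmx (bbasis x) *m ((bbasis x *m dilation 0 u *m invmx (bbasis x) - 1) *m w)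
    = (dilation 0 u - 1%:M) *m c.
  by rewrite !mulmxBl !mulmxBr -!mulmxA mulKmx // [1 *m _]mul1mx mul1mx.
have -> : (dilation 0 u - 1%:M : 'M[F]_n) = diag_mx (\row_k (if k == 0 then u - 1 else 0)).
  apply/matrixP => k l; rewrite !mxE; have [->|kl] := eqVneq k l.
    by case: ifP; rewrite /= ?mulr1n ?subrr.
  by rewrite !mulr0n subrr.
rewrite mul_diag_mx mxE [X in X * _]mxE.
have [ei|ni] := eqVneq i 0; last by left; rewrite mul0r.
case: (L i) => [ci0|h]; first by left; rewrite -/c ci0 mulr0.
have [->|u0] := eqVneq (u - 1) 0; first by left; rewrite mul0r.
have [->|c0] := eqVneq (c i 0) 0; first by left; rewrite mulr0.
right; rewrite vM // intrD addrAC [s + _]addrC -addrA lerD //.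
  by rewrite ler_int (inPk_val_ge u0 hu).
by rewrite addrC.
Qed.

End Lattices.

End Valuation.

Lemma mxtrace_conj (F : fieldType) n (B X : 'M[F]_n) : B \in unitmx ->
  \tr (invmx B *m X *m B) = \tr X.
Proof. by move=> uB; rewrite mxtrace_mulC mulmxA mulmxV ?mul1mx. Qed.

Section IntAbove.
Variable R : realType.

(* the least integer strictly above r, so that P^(int_above r) = {a | v a > r} *)
Definition int_above (r : R) : int := Num.floor r + 1.

Lemma int_above_gt r : r < (int_above r)%:~R.
Proof. exact: floorD1_gt. Qed.

Lemma int_above_le r (z : int) : r < z%:~R -> int_above r <= z.
Proof. by rewrite -floor_lt_int /int_above; move: (Num.floor r) => f ?; lia. Qed.

Lemma int_above_half r : 0 < r ->
  [/\ 1 <= int_above (r / 2), int_above (r / 2) <= int_above r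
    & int_above r <= int_above (r / 2) + int_above (r / 2)].
Proof.
move=> r0; have h0 : 0 <= Num.floor (r / 2) by rewrite floor_ge0; lra.
split; first by rewrite /int_above; lia.
  by apply: int_above_le; apply: le_lt_trans (int_above_gt _); lra.
apply: int_above_le; rewrite intrD; have := int_above_gt (r / 2); lra.
Qed.

End IntAbove.

Section HypothesisC.
Variables (F : fieldType) (v : F -> int) (R : realType) (m : nat).
Local Notation n := m.+1.
Hypothesis vM : forall x y, x != 0 -> y != 0 -> v (x * y) = v x + v y.
Hypothesis vD : forall x y, x != 0 -> y != 0 -> x + y != 0 ->
  Num.min (v x) (v y) <= v (x + y).
Variables (r : R) (x : bpoint F n R).
Hypotheses (r_gt0 : 0 < r) (x_pt : is_bpoint x).

Local Notation Pk := (inPk v).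
Local Notation M := (int_above r).
Local Notation J := (int_above (r / 2)).

Lemma zstar_in_gstar beta : Pk (1 - M) beta -> in_gstar v (- r) (@zstar F n beta).
Proof.
move=> bP; exists x; split => // X [t rt hX]; rewrite opprK in rt.
rewrite /inP /zstar -(mxtrace_conj X x_pt).
apply: (@inPkW _ _ 1 ((1 - M) + M)); first by rewrite subrK.
apply: (inPkM vM) bP _; apply: (inPk_sum vD) => i _.
case: (mp_lie_entry_shift vM x_pt hX i i) => [->|h]; first by left.
right; apply: int_above_le; apply: lt_le_trans rt _.
by rewrite -(lerD2r (bcoord x i)) addrC.
Qed.

Lemma det_oneD_sub_trace (Y : 'M[F]_n) : mp_lie_plus v x (r / 2) Y ->
  let Y' := invmx (bbasis x) *m Y *m bbasis x in
  Pk J (\tr Y) /\ Pk M (\det (1%:M + Y') - 1 - \tr Y).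
Proof.
move=> [t rt hY] Y'; have Y'_shift := mp_lie_entry_shift vM x_pt hY.
have t_gt0 : 0 < t by apply: lt_trans rt; rewrite divr_gt0.
have [J1 JM MJJ] := int_above_half r_gt0.
have diagJ i : Pk J (Y' i i).
  case: (Y'_shift i i) => [->|h]; first by left.
  right; apply: int_above_le; apply: lt_le_trans rt _.
  by rewrite -(lerD2r (bcoord x i)) addrC.
have trJ : Pk J (\tr Y) by rewrite -(mxtrace_conj Y x_pt); apply: (inPk_sum vD).
split => //; rewrite -(mxtrace_conj Y x_pt).
have -> : \det (1%:M + Y') - 1 - \tr Y' = (\det (1%:M + Y') - \prod_i (1 + Y' i i))
    + (\prod_i (1 + Y' i i) - 1 - \sum_i Y' i i) by rewrite /mxtrace; ring.
apply: (inPkD vD).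
  apply: (det_oneD_sub_prod vM vD (ltW t_gt0) Y'_shift) => z tz.
  by apply: int_above_le; apply: lt_le_trans tz; rewrite mulr2n; lra.
apply: inPkW MJJ _; apply: (prod_oneD_sub_sum vM vD _ _ diagJ).
exact: le_trans ler01 J1.
Qed.

Variables (C : numClosedFieldType) (phi : 'M[F]_n -> C).
Hypothesis phi_neq0 : forall g, g \in unitmx -> phi g != 0.
Hypothesis phiM : forall g h, g \in unitmx -> h \in unitmx -> phi (g *m h) = phi g * phi h.
Hypothesis two_neq0 : (2 : F) != 0.

Local Notation chi := (det_char phi).

Lemma det_char_trivial_above (x0 : bpoint F n R) : is_bpoint x0 ->
  trivial_on phi (mp_grp_plus v x0 r) -> forall e, Pk M e -> chi (1 + e) = 1.
Proof.
move=> x0_pt triv e he; have [J1 JM _] := int_above_half r_gt0.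
have e_neq0 : 1 + e != 0 by apply/(oneD_neq0 vM)/(inPkW (le_trans J1 JM) he).
have uD : @dilation F m 0 (1 + e) \in unitmx := dilation_unit 0 e_neq0.
have uB : bbasis x0 \in unitmx := x0_pt.
rewrite -(hom_dilation phi_neq0 phiM 0 e_neq0).
rewrite -(hom_conj phi_neq0 phiM two_neq0 uB uD); apply: triv.
exists M%:~R; first exact: int_above_gt.
split; first by rewrite !unitmx_mul uB uD unitmx_inv.
by apply: (mp_lie_conj_dilation vM x0_pt); rewrite addrC addKr.
Qed.

Lemma zstar_realizes (psi : F -> C) beta :
  (forall e, Pk M e -> chi (1 + e) = 1) ->
  (forall a, Pk J a -> chi (1 + a) = psi (beta * a)) ->
  realizes v psi phi x r (@zstar F n beta).
Proof.
move=> chiP hb Y hY; have [trJ] := det_oneD_sub_trace hY.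
set B := bbasis x; set Y' := invmx B *m Y *m B; set e := _ - _ - _ => he.
have [J1 JM _] := int_above_half r_gt0; have M1 := le_trans J1 JM.
have detE : \det (1%:M + Y') = 1 + \tr Y + e by rewrite /e; ring.
have uB : B \in unitmx := x_pt.
have u1 : (1%:M + Y') \in unitmx.
  rewrite unitmxE unitfE detE -addrA; apply: (oneD_neq0 vM).
  by apply: (inPkD vD); [apply: inPkW J1 trJ | apply: inPkW M1 he].
have -> : 1 + Y = B *m (1%:M + Y') *m invmx B.
  by rewrite mulmxDr mulmxDl mulmx1 mulmxV // /Y' !mulmxA mulmxV // mul1mx -mulmxA mulmxV // mulmx1.
rewrite (hom_conj phi_neq0 phiM two_neq0 uB u1) (hom_det phi_neq0 phiM two_neq0 u1).
rewrite detE (char_oneD_shift vM vD (det_charM phiM) chiP M1) //.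
  exact: hb.
exact: inPkW J1 trJ.
Qed.

End HypothesisC.

Theorem lemma2p50 (F : fieldType) (v : F -> int) (R : realType)
  (psi : F -> R[i]) (n : nat) (phi : 'M[F]_n -> R[i]) (r : R) (x : bpoint F n R) :
  (2 <= n)%N ->
  is_nonarch_local_field v ->
  is_level_one_char v psi ->
  is_hom phi ->
  has_depth v phi r -> 0 < r ->
  is_bpoint x ->
  exists beta : F,
    in_gstar v (- r) (@zstar F n beta) /\ realizes v psi phi x r (@zstar F n beta).
Proof.
case: n phi x => [//|m] phi x _.
move=> [vM [vD [pi [pi_neq0 v_pi]] _ [s [s_inO s_cover]] [two_neq0 _]]].
move=> [psiD _ psiP psi_nontriv] [phi_neq0 phi_mul] [_ [x0 [x0_pt triv]] _] r_gt0 x_pt.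
have phiM g h : g \in unitmx -> h \in unitmx -> phi (g *m h) = phi g * phi h.
  by move=> ug uh; rewrite mulmxE phi_mul.
have [J1 JM MJJ] := int_above_half r_gt0.
have chiP := det_char_trivial_above vM r_gt0 phi_neq0 phiM two_neq0 x0_pt triv.
have thetaD := char_oneD_additive vM vD (det_charM phiM) chiP J1 JM MJJ.
have [beta [beta_in hb]] := ideal_char_dual vM vD psiD psiP psi_nontriv s_inO s_cover
  pi_neq0 v_pi thetaD chiP JM.
exists beta; split; first by apply: (zstar_in_gstar vM vD x_pt beta_in).
by apply: (zstar_realizes vM vD r_gt0 x_pt phi_neq0 phiM two_neq0 chiP hb).
Qed.
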